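(* Let $n\ge 2$, let $\beta\in B_n$ be a half-twist with $\pi(\beta)=(i,j)$, $i\neq j$, and let $k\ge 1$ be an integer. Then for every braid word $w$ representing $\beta^{2k}$ and all distinct $s,t\in\{1,\dots,n\}$, $$cr_{w}(s,t)=\begin{cases}k & \text{if } \{s,t\}=\{i,j\},\\ 0&\text{otherwise.}\end{cases}$$
   Context: $B_n$ is Artin's braid group with generators $\sigma_1,\dots,\sigma_{n-1}$; $\pi:B_n\to S_n$ is the homomorphism with $\pi(\sigma_i)=(i,i+1)$. A half-twist is an element of the conjugacy class of $\sigma_1$. Crossing index: let $w=\sigma_{i_1}^{e_1}\cdots\sigma_{i_l}^{e_l}$ ($e_r\in\{\pm1\}$) be a braid word; label the strings by their starting positions $1,\dots,n$, and track their positions as the letters are read left to right, each letter $\sigma_p^{\pm1}$ exchanging the strings currently at positions $p$ and $p+1$. By convention, in the letter $\sigma_p^{e}$ the string currently at position $p$ passes under the string currently at position $p+1$ if $e=1$, and the string at position $p+1$ passes under the one at position $p$ if $e=-1$. For distinct strings $s,t$, $cr_w(s,t)$ is the sum of the exponents $e_r$ over all letters of $w$ in which string $s$ passes under string $t$. *)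

From mathcomp Require Import all_boot all_order all_algebra.
Set Implicit Arguments. Unset Strict Implicit. Unset Printing Implicit Defensive.
Import GRing.Theory Num.Theory.
Local Open Scope ring_scope.

(* A letter (p, e) is sigma_p^{+1} if e = true and sigma_p^{-1} if e = false;
   generator indices are 1-based as in the paper. *)
Definition letter := (nat * bool)%type.
Definition bword := seq letter.

Definition sig (p : nat) : letter := (p, true).

Definition valid_word (n : nat) (w : bword) : bool :=
  all (fun l : letter => (0 < l.1 < n)%N) w.

Definition winv (w : bword) : bword := rev (map (fun l : letter => (l.1, ~~ l.2)) w).

Inductive brel (n : nat) : bword -> bword -> Prop :=
| brel_cancel p e : (0 < p < n)%N -> brel n [:: (p, e); (p, ~~ e)] [::]
| brel_far p q : (0 < p < n)%N -> (0 < q < n)%N -> (p.+1 < q)%N ->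
    brel n [:: sig p; sig q] [:: sig q; sig p]
| brel_braid p : (0 < p)%N -> (p.+1 < n)%N ->
    brel n [:: sig p; sig p.+1; sig p] [:: sig p.+1; sig p; sig p.+1].

(* equality in B_n of the elements represented by two words: the congruence
   (equivalence closed under concatenation contexts) generated by brel *)
Inductive beq (n : nat) : bword -> bword -> Prop :=
| beq_rel u v a b : brel n a b -> beq n (u ++ a ++ v) (u ++ b ++ v)
| beq_refl w : beq n w w
| beq_sym w1 w2 : beq n w1 w2 -> beq n w2 w1
| beq_trans w1 w2 w3 : beq n w1 w2 -> beq n w2 w3 -> beq n w1 w3.

Definition wpow (w : bword) (k : nat) : bword := flatten (nseq k w).

(* b represents a half-twist: an element conjugate to sigma_1 *)
Definition half_twist (n : nat) (b : bword) : Prop :=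
  exists u : bword, valid_word n u /\ beq n b (u ++ [:: sig 1] ++ winv u).

(* state: position -> label (starting position) of the string currently there *)
Definition swap_at (f : nat -> nat) (p : nat) : nat -> nat :=
  fun x => if x == p then f p.+1 else if x == p.+1 then f p else f x.

Definition final_state (w : bword) : nat -> nat :=
  foldl (fun f (l : letter) => swap_at f l.1) id w.

Definition perm_is_transp (n : nat) (b : bword) (i j : nat) : Prop :=
  final_state b i = j /\ final_state b j = i /\
  forall x, (0 < x <= n)%N -> x != i -> x != j -> final_state b x = x.

(* crossing index: sum of exponents of letters in which string s passes under
   string t, with the convention of the paper *)
Fixpoint cr_aux (f : nat -> nat) (w : bword) (s t : nat) : int :=
  match w with
  | [::] => 0
  | (p, e) :: w' =>
      let a := f p in let b := f p.+1 in
      let c : int := if e then (if (a == s) && (b == t) then 1 else 0)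
                     else (if (b == s) && (a == t) then -1 else 0) in
      c + cr_aux (swap_at f p) w' s t
  end.

Definition cr (w : bword) (s t : nat) : int := cr_aux id w s t.

(* The map sending a word to (its permutation of strings, its crossing indices
   from every starting state) is invariant under the defining relations of B_n,
   so it can be computed on any representative.  Writing the half-twist as
   u sigma_1 u^-1, the word (u sigma_1^2 u^-1)^k represents beta^2k; it fixes
   every string, so its crossing indices are k times those of u sigma_1^2 u^-1,
   and the two halves u, u^-1 cancel.  What remains is sigma_1^2 read from the
   state reached after u, in which the strings g 1, g 2 at positions 1, 2 cross
   once in each order; and {g 1, g 2} = {i, j} since these are the only strings
   moved by u sigma_1 u^-1. *)
From mathcomp Require Import all_boot all_order all_algebra.
From mathcomp Require Import zify ring.
From Stdlib Require Import FunctionalExtensionality.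
Import GRing.Theory Num.Theory.
Local Open Scope ring_scope.

Lemma swap_at_l f p : swap_at f p p = f p.+1.
Proof. by rewrite /swap_at eqxx. Qed.

Lemma swap_at_r f p : swap_at f p p.+1 = f p.
Proof. by rewrite /swap_at eqxx (_ : (p.+1 == p) = false) //; lia. Qed.

Lemma swap_at_other f p x : x <> p -> x <> p.+1 -> swap_at f p x = f x.
Proof. by move=> /eqP/negbTE xp /eqP/negbTE xp1; rewrite /swap_at xp xp1. Qed.

Lemma swap_atK f p : swap_at (swap_at f p) p = f.
Proof.
apply: functional_extensionality => x.
case: (eqVneq x p) => [->|xp]; first by rewrite swap_at_l swap_at_r.
case: (eqVneq x p.+1) => [->|xp1]; first by rewrite swap_at_r swap_at_l.
by rewrite !swap_at_other //; apply/eqP.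
Qed.

Lemma swap_at_comp f h p : swap_at (f \o h) p = f \o swap_at h p.
Proof.
apply: functional_extensionality => x.
by rewrite /swap_at /=; case: ifP => //; case: ifP.
Qed.

Lemma winvK u : winv (winv u) = u.
Proof.
rewrite /winv map_rev revK -map_comp map_id_in // => -[p e] _ /=.
by rewrite negbK.
Qed.

Definition run (f : nat -> nat) (w : bword) : nat -> nat :=
  foldl (fun g (l : letter) => swap_at g l.1) f w.

Lemma run_cons f l w : run f (l :: w) = run (swap_at f l.1) w.
Proof. by []. Qed.

Lemma run_cat f u v : run f (u ++ v) = run (run f u) v.
Proof. exact: foldl_cat. Qed.

Lemma run_winv f u : run (run f u) (winv u) = f.
Proof.
elim: u f => [|[p e] u IH] f //.
by rewrite /winv /= rev_cons -cats1 -/(winv u) run_cat IH /= swap_atK.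
Qed.

Lemma run_comp f h w : run (f \o h) w = f \o run h w.
Proof. by elim: w h => [|l w IH] h //; rewrite !run_cons swap_at_comp IH. Qed.

Lemma run_apply f w x : run f w x = f (run id w x).
Proof. by rewrite -[f in LHS]/(f \o id) run_comp. Qed.

Lemma run_id_bij u : cancel (run id u) (run id (winv u)) /\
                     cancel (run id (winv u)) (run id u).
Proof.
split=> x; rewrite -run_apply ?run_winv //.
by rewrite -{2}(winvK u) run_winv.
Qed.

Definition cr_letter (f : nat -> nat) (l : letter) (s t : nat) : int :=
  let a := f l.1 in let b := f l.1.+1 in
  if l.2 then (if (a == s) && (b == t) then 1 else 0)
  else (if (b == s) && (a == t) then -1 else 0).

Lemma cr_aux_cons f l w s t :
  cr_aux f (l :: w) s t = cr_letter f l s t + cr_aux (swap_at f l.1) w s t.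
Proof. by case: l. Qed.

Lemma cr_aux_cat f u v s t :
  cr_aux f (u ++ v) s t = cr_aux f u s t + cr_aux (run f u) v s t.
Proof.
elim: u f => [|l u IH] f; first by rewrite add0r.
by rewrite cat_cons !cr_aux_cons IH addrA.
Qed.

Lemma cr_aux_winv f u s t : cr_aux (run f u) (winv u) s t = - cr_aux f u s t.
Proof.
elim: u f => [|[p e] u IH] f //.
rewrite /winv /= rev_cons -cats1 -/(winv u) cr_aux_cat IH run_winv.
rewrite !cr_aux_cons /= /cr_letter /= swap_at_l swap_at_r addr0.
by case: e; case: ifP; rewrite opprD ?opprK addrC.
Qed.

Definition cr_equiv (w1 w2 : bword) : Prop :=
  forall f, run f w1 = run f w2 /\ forall s t, cr_aux f w1 s t = cr_aux f w2 s t.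

Lemma cr_equiv_refl w : cr_equiv w w.
Proof. by []. Qed.

Lemma cr_equiv_sym w1 w2 : cr_equiv w1 w2 -> cr_equiv w2 w1.
Proof. by move=> e f; have [-> ecr] := e f; split=> // s t; rewrite ecr. Qed.

Lemma cr_equiv_trans w1 w2 w3 : cr_equiv w1 w2 -> cr_equiv w2 w3 -> cr_equiv w1 w3.
Proof.
move=> e e' f; have [-> ecr] := e f; have [-> ecr'] := e' f.
by split=> // s t; rewrite ecr ecr'.
Qed.

Lemma cr_equiv_cat w1 w2 x1 x2 :
  cr_equiv w1 w2 -> cr_equiv x1 x2 -> cr_equiv (w1 ++ x1) (w2 ++ x2).
Proof.
move=> e e' f; have [erun ecr] := e f; have [erun' ecr'] := e' (run f w2).
by split=> [|s t]; rewrite ?run_cat ?cr_aux_cat erun ?ecr ?ecr' ?erun'.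
Qed.

Lemma brel_cr_equiv n a b : brel n a b -> cr_equiv a b.
Proof.
case=> [p e _ | p q _ _ far | p _ _] f; split=> [|s t].
- by rewrite /= swap_atK.
- rewrite !cr_aux_cons /cr_letter /= swap_at_l swap_at_r.
  by case: e; case: ifP; rewrite ?addr0 ?subrr.
- apply: functional_extensionality => x.
  by rewrite /= /swap_at; repeat case: eqP => //; lia.
- by rewrite !cr_aux_cons /cr_letter /= !swap_at_other //; lia.
- apply: functional_extensionality => x.
  by rewrite /= /swap_at; repeat case: eqP => //; lia.
- have below g : swap_at g p.+1 p = g p by rewrite swap_at_other //; lia.
  have above g : swap_at g p p.+2 = g p.+2 by rewrite swap_at_other //; lia.
  rewrite !cr_aux_cons /cr_letter /= !(below, above, swap_at_l, swap_at_r) !addr0.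
  ring.
Qed.

Lemma beq_cr_equiv {n w1 w2} : beq n w1 w2 -> cr_equiv w1 w2.
Proof.
elim=> [u v a b r | w | {}w1 {}w2 _ | {}w1 {}w2 w3 _ e12 _ e23].
- by apply: cr_equiv_cat => //; apply: cr_equiv_cat => //; apply: brel_cr_equiv r.
- exact: cr_equiv_refl.
- exact: cr_equiv_sym.
- exact: cr_equiv_trans e12 e23.
Qed.

Lemma cr_equiv_winv_cat u : cr_equiv (winv u ++ u) [::].
Proof.
move=> f; split=> [|s t]; first by rewrite run_cat -{2}(winvK u) run_winv.
by rewrite cr_aux_cat -{3}(winvK u) cr_aux_winv subrr.
Qed.

Lemma cr_equiv_wpow w1 w2 m : cr_equiv w1 w2 -> cr_equiv (wpow w1 m) (wpow w2 m).
Proof. by move=> e; elim: m => [|m IH] //; apply: cr_equiv_cat. Qed.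

Lemma wpow_double w k : wpow w (2 * k) = wpow (w ++ w) k.
Proof.
elim: k => [|k IH] //.
by rewrite mulnS /wpow /= -/(wpow w _) IH catA.
Qed.

Lemma cr_equiv_conj_sq u v :
  cr_equiv ((u ++ v ++ winv u) ++ (u ++ v ++ winv u)) (u ++ (v ++ v) ++ winv u).
Proof.
have -> : (u ++ v ++ winv u) ++ (u ++ v ++ winv u) =
          u ++ v ++ (winv u ++ u) ++ v ++ winv u by rewrite !catA.
have -> : u ++ (v ++ v) ++ winv u = u ++ v ++ [::] ++ v ++ winv u by rewrite cat0s !catA.
do 2 apply: cr_equiv_cat => //.
by apply: cr_equiv_cat => //; apply: cr_equiv_winv_cat.
Qed.

Lemma cr_aux_wpow f w k s t :
  run f w = f -> cr_aux f (wpow w k) s t = k%:Z * cr_aux f w s t.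
Proof.
move=> fixw; elim: k => [|k IH]; first by rewrite mul0r.
by rewrite /wpow /= -/(wpow w k) cr_aux_cat fixw IH -addn1 PoszD mulrDl mul1r addrC.
Qed.

Lemma run_conj f u v : run (run f u) v = run f u -> run f (u ++ v ++ winv u) = f.
Proof. by move=> fixv; rewrite !run_cat fixv run_winv. Qed.

Lemma cr_aux_conj f u v s t : run (run f u) v = run f u ->
  cr_aux f (u ++ v ++ winv u) s t = cr_aux (run f u) v s t.
Proof. by move=> fixv; rewrite !cr_aux_cat fixv cr_aux_winv addrC subrK. Qed.

Lemma cr_aux_sig_sq f p s t : f p != f p.+1 ->
  cr_aux f [:: sig p; sig p] s t =
  (if ((s == f p) && (t == f p.+1)) || ((s == f p.+1) && (t == f p)) then 1 else 0).
Proof.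
move=> neq; rewrite /= swap_at_l swap_at_r addr0 !(eq_sym s) !(eq_sym t).
case: (eqVneq (f p) s) => [<-|_] /=; last by rewrite add0r.
by rewrite eq_sym in neq; rewrite (negbTE neq) /= addr0 orbF.
Qed.

Lemma final_state_conj u p x :
  final_state (u ++ [:: sig p] ++ winv u) x = swap_at (run id u) p (run id (winv u) x).
Proof.
by rewrite -[final_state _]/(run id _) !run_cat run_apply.
Qed.

Lemma moved_conj_sig u p x : final_state (u ++ [:: sig p] ++ winv u) x != x ->
  (x == run id u p) || (x == run id u p.+1).
Proof.
have [gK giK] := run_id_bij u.
rewrite final_state_conj; apply: contraR => /norP[xp xp1].
rewrite swap_at_other ?giK // => e; [move: xp | move: xp1];
  by rewrite -{1}[x]giK e eqxx.
Qed.

Theorem lemma3p4 (n : nat) (b : bword) (i j k : nat) :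
  (2 <= n)%N -> valid_word n b -> half_twist n b ->
  (0 < i <= n)%N -> (0 < j <= n)%N -> i != j -> perm_is_transp n b i j ->
  (1 <= k)%N ->
  forall w : bword, valid_word n w -> beq n w (wpow b (2 * k)) ->
  forall s t : nat, (0 < s <= n)%N -> (0 < t <= n)%N -> s != t ->
  cr w s t = (if ((s == i) && (t == j)) || ((s == j) && (t == i))
              then (k%:Z) else 0).
Proof.
move=> _ _ [u [_ b_conj]] _ _ ij [bi [bj _]] _ w _ w_pow s t _ _ _.
set g := run id u.
have b_equiv := beq_cr_equiv b_conj.
have w_equiv : cr_equiv w (wpow (u ++ [:: sig 1; sig 1] ++ winv u) k).
  apply: cr_equiv_trans (beq_cr_equiv w_pow) _; rewrite wpow_double.
  apply: cr_equiv_wpow; apply: cr_equiv_trans (cr_equiv_conj_sq u [:: sig 1]).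
  exact: cr_equiv_cat.
have sq_fixed : run g [:: sig 1; sig 1] = g by rewrite /= swap_atK.
have g12 : g 1 != g 2 by apply: contraTneq isT => /(can_inj (run_id_bij u).1).
rewrite /cr; have [_ ->] := w_equiv id; rewrite cr_aux_wpow ?run_conj // cr_aux_conj //.
rewrite cr_aux_sig_sq //.
have moved x y : final_state b x = y -> x != y -> (x == g 1) || (x == g 2).
  move=> bx xy; apply: moved_conj_sig.
  by rewrite -[final_state _]/(run id _) -(b_equiv id).1 [run _ _ _]bx eq_sym.
have ji : j != i by rewrite eq_sym.
case/orP: (moved i j bi ij) => /eqP ig; case/orP: (moved j i bj ji) => /eqP jg;
  move: ij; rewrite ig jg ?eqxx // => _.
- by case: ifP; rewrite ?mulr1 ?mulr0.
- by rewrite orbC; case: ifP; rewrite ?mulr1 ?mulr0.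
Qed.
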